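(* Let $\varphi\colon (A,m,K)\to (B,n,L)$ be a local homomorphism of noetherian local rings, let $I$ be a proper ideal of $A$, and let $J$ be a proper ideal of $B$ with $IB\subseteq J$. Let $\varphi_I\colon A/I\to B/IB$ and $\varphi_{I,J}\colon A/I\to B/J$ be the induced local maps, $\pi_{J/IB}\colon B/IB\to B/J$ the canonical surjection, and $\pi_{(J+mB)/mB}\colon B/mB\to B/(J+mB)$ the canonical surjection. Then $$\operatorname{rd}(\varphi_I)+\operatorname{rd}(\pi_{J/IB})-\operatorname{rd}(\varphi_{I,J})=\operatorname{rd}(\pi_{(J+mB)/mB}),$$ and hence $$\operatorname{rd}(\varphi_{I,J})=\operatorname{rd}(\varphi_I)+\operatorname{rd}(\pi_{J/IB})-\operatorname{rd}(\pi_{(J+mB)/mB})=\operatorname{rd}(\varphi)-(\operatorname{rd}(\pi_I)-\operatorname{rd}(\pi_{IB}))+\operatorname{rd}(\pi_{J/IB})-\operatorname{rd}(\pi_{(J+mB)/mB}),$$ where $\pi_I\colon A\to A/I$ and $\pi_{IB}\colon B\to B/IB$ are the canonical surjections.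
   Context: All rings are commutative and noetherian with identity; ring homomorphisms are unital. A local homomorphism $\varphi\colon (A,m,K)\to(B,n,L)$ is a ring homomorphism between local rings with $\varphi(m)\subseteq n$; here $K=A/m$, $L=B/n$. The regularity defect $\operatorname{rd}(\varphi)$ is the $L$-dimension of the kernel of the natural $L$-linear map $m/m^2\otimes_K L\to n/n^2$, $\bar x\otimes\bar b\mapsto \overline{\varphi(x)b}$. *)

From mathcomp Require Import all_boot all_order all_algebra.
From Stdlib Require Import ClassicalEpsilon.
Set Implicit Arguments. Unset Strict Implicit. Unset Printing Implicit Defensive.
Import GRing.Theory.
Local Open Scope ring_scope.

Section CommAlg.
Variable R : comUnitRingType.

Definition is_idealP (I : R -> Prop) : Prop :=
  [/\ I 0, (forall x y, I x -> I y -> I (x + y)) & (forall r x, I x -> I (r * x))].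

Definition proper_idealP (I : R -> Prop) : Prop := is_idealP I /\ ~ I 1.

Definition maximal_idealP (M : R -> Prop) : Prop :=
  proper_idealP M /\
  forall J, proper_idealP J -> (forall x, M x -> J x) -> forall x, J x -> M x.

Definition local_ring_with (m : R -> Prop) : Prop :=
  maximal_idealP m /\ forall M, maximal_idealP M -> forall x, M x <-> m x.

Definition noetherian : Prop :=
  forall I, is_idealP I -> exists n (g : 'I_n -> R), (forall i, I (g i)) /\
    forall x, I x -> exists c : 'I_n -> R, x = \sum_(i < n) c i * g i.

Definition ideal_span (P : R -> Prop) : R -> Prop :=
  fun x => exists n (r g : 'I_n -> R), (forall i, P (g i)) /\
    x = \sum_(i < n) r i * g i.

Definition ideal_sum (I J : R -> Prop) : R -> Prop :=
  fun z => exists x y, I x /\ J y /\ z = x + y.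

Definition ideal_mul (I J : R -> Prop) : R -> Prop :=
  ideal_span (fun z => exists x y, I x /\ J y /\ z = x * y).

Definition zero_ideal : R -> Prop := fun x => x = 0.
End CommAlg.

Definition ideal_ext (R S : comUnitRingType) (f : R -> S) (I : R -> Prop) : S -> Prop :=
  ideal_span (fun z => exists a, I a /\ z = f a).

(* Regularity defect of the local map R/I -> S/J induced by f : R -> S
   (with f(I) ⊆ J), where (R,m,K), (S,n,L) are local.  The maximal ideal of
   R/I is m/I and its square is (m^2+I)/I, so the cotangent space of R/I is
   m/(m^2+I) as a K-vector space; likewise n/(n^2+J) for S/J.
   We fix a K-basis x_1..x_e of m/(m^2+I) (given by lifts x_i in m), which
   identifies (m/(m^2+I)) ⊗_K L with L^e; an element of L^e is represented by
   lifts b : 'I_e -> S (modulo n).  The kernel of the natural map is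
   { b | sum f(x_i) b_i ∈ n^2 + J }, and its L-dimension is the maximal
   number of elements of it that are L-linearly independent, i.e. independent
   modulo n. *)
Section RD.
Variables (R S : comUnitRingType) (f : R -> S) (m : R -> Prop) (n : S -> Prop).

Definition cot_basis (I : R -> Prop) (e : nat) (x : 'I_e -> R) : Prop :=
  let Q := ideal_sum (ideal_mul m m) I in
  [/\ forall i, m (x i),
      (forall a : 'I_e -> R, Q (\sum_(i < e) a i * x i) -> forall i, m (a i))
    & (forall y, m y -> exists a : 'I_e -> R, Q (y - \sum_(i < e) a i * x i))].

Definition in_kernel (J : S -> Prop) (e : nat) (x : 'I_e -> R) (b : 'I_e -> S) : Prop :=
  ideal_sum (ideal_mul n n) J (\sum_(i < e) f (x i) * b i).

Definition indep_mod_n (e d : nat) (v : 'I_d -> 'I_e -> S) : Prop :=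
  forall c : 'I_d -> S, (forall i, n (\sum_(j < d) c j * v j i)) -> forall j, n (c j).

Definition is_rd (I : R -> Prop) (J : S -> Prop) (r : nat) : Prop :=
  exists e (x : 'I_e -> R), cot_basis I x /\
    (exists v : 'I_r -> 'I_e -> S, (forall j, in_kernel J x (v j)) /\ indep_mod_n v) /\
    (forall d (v : 'I_d -> 'I_e -> S),
        (forall j, in_kernel J x (v j)) -> indep_mod_n v -> (d <= r)%N).

Definition rdq (I : R -> Prop) (J : S -> Prop) : nat :=
  epsilon (inhabits 0%N) (fun r => is_rd I J r).
End RD.

(* Fix bases x of m/m^2 and y of n/n^2, and let G be the matrix over L of the images of the
   phi(x_i) in n/n^2 with respect to y.  The regularity defect of A/I -> B/N can be computed
   with the family x, which only spans m/(m^2 + I):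
     rd + dim Rel_x(I) = dim {l in L^e | sum_i phi(x_i) l_i in n^2 + N},
   where Rel_x(I) is the space of relations of x modulo m^2 + I.  The right-hand side is the
   preimage under G of the space W(N) of relations of y modulo n^2 + N, of dimension
   dim ker G + dim (W(N) ∩ im G).  Since W(mB) = im G, W(IB) ⊆ im G and
   W(J + mB) = W(J) + W(mB), every defect in the statement is a combination of dim ker G,
   dim Rel_x(I), dim W(IB), dim W(J) and dim (W(J) ∩ im G), and the identities reduce to
   dim (U + V) + dim (U ∩ V) = dim U + dim V. *)

From HB Require Import structures.
From mathcomp Require Import all_boot all_order all_algebra.
From mathcomp Require Import ring_quotient zify.
From Stdlib Require Import ClassicalEpsilon.
Set Implicit Arguments. Unset Strict Implicit. Unset Printing Implicit Defensive.
Import GRing.Theory.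
Local Open Scope ring_scope.

Section Ideals.
Variable R : comUnitRingType.
Implicit Types (I J P : R -> Prop) (x y : R).

Lemma ideal0 I : is_idealP I -> I 0. Proof. by case. Qed.

Lemma idealD I x y : is_idealP I -> I x -> I y -> I (x + y).
Proof. by case=> _ + _; apply. Qed.

Lemma idealZ I r x : is_idealP I -> I x -> I (r * x).
Proof. by case=> _ _; apply. Qed.

Lemma idealZr I r x : is_idealP I -> I x -> I (x * r).
Proof. by rewrite mulrC; apply: idealZ. Qed.

Lemma idealN I x : is_idealP I -> I x -> I (- x).
Proof. by rewrite -mulN1r; apply: idealZ. Qed.

Lemma idealB I x y : is_idealP I -> I x -> I y -> I (x - y).
Proof. by move=> hI hx hy; apply: idealD => //; apply: idealN. Qed.

Lemma ideal_bigsum I k (F : 'I_k -> R) :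
  is_idealP I -> (forall i, I (F i)) -> I (\sum_(i < k) F i).
Proof.
by move=> hI hF; apply: (big_ind I) => // [|a b]; [apply: ideal0 | apply: idealD].
Qed.

Lemma ideal_shift I x y : is_idealP I -> I (x - y) -> I x <-> I y.
Proof.
move=> hI hxy; split => h; last by rewrite -(subrK y x); apply: idealD.
have -> : y = x - (x - y) by rewrite opprB addrC subrK.
exact: idealB.
Qed.

Lemma exchange_sum_mul p q (b : 'I_p -> R) (g : 'I_p -> 'I_q -> R) (x : 'I_q -> R) :
  \sum_(k < p) b k * (\sum_(i < q) g k i * x i) =
  \sum_(i < q) (\sum_(k < p) b k * g k i) * x i.
Proof.
under eq_bigr do rewrite mulr_sumr.
rewrite exchange_big /=; apply: eq_bigr => i _.
by rewrite mulr_suml; apply: eq_bigr => k _; rewrite mulrA.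
Qed.

Lemma ideal_change_coords Q p q (z : 'I_p -> R) (w : 'I_q -> R) (d : 'I_p -> 'I_q -> R)
    (r : 'I_p -> R) :
  is_idealP Q -> (forall i, Q (z i - \sum_(k < q) d i k * w k)) ->
  Q (\sum_(i < p) z i * r i - \sum_(k < q) w k * \sum_(i < p) r i * d i k).
Proof.
move=> hQ hd; have -> : \sum_(k < q) w k * (\sum_(i < p) r i * d i k) =
                        \sum_(i < p) (\sum_(k < q) d i k * w k) * r i.
  under eq_bigr do rewrite mulr_sumr.
  rewrite exchange_big /=; apply: eq_bigr => i _; rewrite mulr_suml.
  by apply: eq_bigr => k _; rewrite mulrCA [RHS]mulrC [d i k * _]mulrC.
rewrite -sumrB; apply: ideal_bigsum => // i; rewrite -mulrBl; exact: idealZr.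
Qed.

Lemma ideal_span_sub P x : P x -> ideal_span P x.
Proof.
by move=> px; exists 1%N, (fun _ => 1), (fun _ => x); rewrite big_ord1 mul1r.
Qed.

Lemma ideal_span_ideal P : is_idealP (ideal_span P).
Proof.
split.
- by exists 0%N, (fun _ => 0), (fun _ => 0); split; [case | rewrite big_ord0].
- move=> _ _ [k [r [g [hg ->]]]] [k' [r' [g' [hg' ->]]]].
  exists (k + k')%N, (fun i => match split i with inl j => r j | inr j => r' j end),
    (fun i => match split i with inl j => g j | inr j => g' j end); split.
    by move=> i; case: (split i).
  rewrite big_split_ord /=; congr (_ + _); apply: eq_bigr => i _.
    by have /= -> := unsplitK (inl _ i).
  by have /= -> := unsplitK (inr _ i).
- move=> s _ [k [r [g [hg ->]]]]; exists k, (fun i => s * r i), g; split => //.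
  by rewrite mulr_sumr; apply: eq_bigr => i _; rewrite mulrA.
Qed.

Lemma ideal_span_min P I :
  is_idealP I -> (forall x, P x -> I x) -> forall x, ideal_span P x -> I x.
Proof.
move=> hI hPI _ [k [r [g [hg ->]]]]; apply: ideal_bigsum => // i.
by apply: idealZ => //; apply: hPI.
Qed.

Lemma ideal_sum_ideal I J : is_idealP I -> is_idealP J -> is_idealP (ideal_sum I J).
Proof.
move=> hI hJ; split.
- by exists 0, 0; rewrite addr0; split; [apply: ideal0 | split; [apply: ideal0 |]].
- move=> _ _ [a [b [ha [hb ->]]]] [a' [b' [ha' [hb' ->]]]].
  exists (a + a'), (b + b'); split; first exact: idealD.
  by split; [exact: idealD | rewrite addrACA].
- move=> r _ [a [b [ha [hb ->]]]]; exists (r * a), (r * b).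
  by split; [exact: idealZ | split; [exact: idealZ | rewrite mulrDr]].
Qed.

Lemma ideal_sum_l I J x : is_idealP J -> I x -> ideal_sum I J x.
Proof. by move=> hJ hx; exists x, 0; split => //; split; [apply: ideal0 | rewrite addr0]. Qed.

Lemma ideal_sum_r I J x : is_idealP I -> J x -> ideal_sum I J x.
Proof. by move=> hI hx; exists 0, x; split; [apply: ideal0 | split => //; rewrite add0r]. Qed.

Lemma ideal_sum_monor I J J' x :
  (forall y, J y -> J' y) -> ideal_sum I J x -> ideal_sum I J' x.
Proof. by move=> hJ [a [b [ha [hb ->]]]]; exists a, b; split => //; split => //; apply: hJ. Qed.

Lemma ideal_mul_ideal I J : is_idealP (ideal_mul I J).
Proof. exact: ideal_span_ideal. Qed.

Lemma ideal_mulM I J x y : I x -> J y -> ideal_mul I J (x * y).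
Proof. by move=> hx hy; apply: ideal_span_sub; exists x, y. Qed.

Lemma maximal_idealP_ideal I : maximal_idealP I -> is_idealP I.
Proof. by case=> [[]]. Qed.

Lemma zero_idealP : is_idealP (@zero_ideal R).
Proof.
rewrite /zero_ideal; split => //; first by move=> x y -> ->; rewrite addr0.
by move=> r x ->; rewrite mulr0.
Qed.

Lemma zero_ideal_sub I : is_idealP I -> forall x, zero_ideal x -> I x.
Proof. by move=> hI _ ->; apply: ideal0. Qed.

Definition sq_add (n N : R -> Prop) : R -> Prop := ideal_sum (ideal_mul n n) N.

Section SqAdd.
Variables (n N : R -> Prop).
Hypothesis hN : is_idealP N.

Lemma sq_add_ideal : is_idealP (sq_add n N).
Proof. exact/ideal_sum_ideal/hN/ideal_mul_ideal. Qed.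

Lemma sq_add_sqr x : ideal_mul n n x -> sq_add n N x.
Proof. exact: ideal_sum_l. Qed.

Lemma sq_add_r x : N x -> sq_add n N x.
Proof. exact/ideal_sum_r/ideal_mul_ideal. Qed.

Lemma sq_add_lincomb k (z a : 'I_k -> R) :
  (forall i, n (z i)) -> (forall i, n (a i)) -> sq_add n N (\sum_(i < k) z i * a i).
Proof.
move=> hz ha; apply: sq_add_sqr; apply: ideal_bigsum => [|i].
  exact: ideal_mul_ideal.
exact: ideal_mulM.
Qed.
End SqAdd.
End Ideals.

Arguments zero_idealP {R}.

Section Extension.
Variables (R S : comUnitRingType) (f : {rmorphism R -> S}).

Lemma ideal_preimage (J : S -> Prop) : is_idealP J -> is_idealP (fun a => J (f a)).
Proof.
move=> hJ; split.
- by rewrite rmorph0; apply: ideal0.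
- by move=> x y hx hy; rewrite rmorphD; apply: idealD.
- by move=> r x hx; rewrite rmorphM; apply: idealZ.
Qed.

Lemma zero_ideal_map a : zero_ideal a -> zero_ideal (f a).
Proof. by rewrite /zero_ideal => ->; rewrite rmorph0. Qed.

Lemma sq_add_map (m I : R -> Prop) (n N : S -> Prop) a :
  (forall a, m a -> n (f a)) -> (forall a, I a -> N (f a)) ->
  sq_add m I a -> sq_add n N (f a).
Proof.
move=> fm fIN [u [v [hu [hv ->]]]]; rewrite rmorphD; exists (f u), (f v).
split; last by split; [apply: fIN |].
move: u hu; apply: ideal_span_min; first exact/ideal_preimage/ideal_mul_ideal.
by move=> _ [u1 [u2 [hu1 [hu2 ->]]]]; rewrite rmorphM; apply: ideal_mulM; apply: fm.
Qed.
End Extension.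

Section PredSubspace.
Variables (F : fieldType) (e : nat).
Implicit Types P : 'rV[F]_e -> Prop.

Definition lin_closed P :=
  [/\ P 0, (forall u v, P u -> P v -> P (u + v)) & (forall a u, P u -> P (a *: u))].

Lemma lin_closed_row_space P :
  lin_closed P -> exists M : 'M[F]_e, forall v, P v <-> (v <= M)%MS.
Proof.
case=> P0 PD PZ; pose inside (M : 'M[F]_e) := forall v, (v <= M)%MS -> P v.
suff grow k M : inside M -> (e - \rank M <= k)%N ->
    exists M' : 'M[F]_e, forall v, P v <-> (v <= M')%MS.
  by apply: (grow e 0) => [v|]; rewrite ?submx0 ?leq_subr // => /eqP ->.
elim: k M => [|k IH] M inM hk.
  exists M => v; split=> [_|]; last exact: inM.
  by apply: submx_full; rewrite /row_full eqn_leq rank_leq_col -subn_eq0 -leqn0.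
have [sPM|nsPM] := classic (forall v, P v -> (v <= M)%MS).
  by exists M => v; split; [apply: sPM | apply: inM].
have [v [Pv nvM]] : exists v, P v /\ ~ (v <= M)%MS.
  by apply: NNPP => h; apply: nsPM => v Pv; apply: NNPP => nv; apply: h; exists v.
apply: (IH (M + v)%MS).
  move=> w /sub_addsmxP [[u1 u2] /= ->]; apply: PD; first exact/inM/submxMl.
  by rewrite [u2]mx11_scalar mul_scalar_mx; apply: PZ.
have /mxrank_leqif_sup [leMv] := addsmxSl M v.
rewrite addsmx_sub submx_refl (negbTE (introN idP nvM)) => eqMv.
have ltMv : (\rank M < \rank (M + v)%MS)%N by rewrite ltn_neqAle leMv eqMv.
by move: hk ltMv (rank_leq_col (M + v)%MS); lia.
Qed.

(* An arbitrary matrix unless [lin_closed P]. *)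
Definition pred_mx P : 'M[F]_e :=
  epsilon (inhabits 0) (fun M => forall v, P v <-> (v <= M)%MS).

Lemma pred_mxP P : lin_closed P -> forall v, P v <-> (v <= pred_mx P)%MS.
Proof. by move/lin_closed_row_space; apply: epsilon_spec. Qed.

Lemma pred_mx_eqmx P (M : 'M[F]_e) :
  lin_closed P -> (forall v, P v <-> (v <= M)%MS) -> (pred_mx P :=: M)%MS.
Proof.
move=> hP hM; apply/eqmxP/andP; split; apply/row_subP => i.
  by apply/hM/pred_mxP => //; apply: row_sub.
by apply/pred_mxP/hM => //; apply: row_sub.
Qed.

Lemma rank_pred_mx_preim g (G : 'M[F]_(e, g)) (W : 'M[F]_g) P :
  (forall l, P l <-> (l *m G <= W)%MS) ->
  \rank (pred_mx P) = (\rank (kermx G) + \rank (W :&: G))%N.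
Proof.
move=> hPW; have hP : lin_closed P.
  split => [|u v|a u]; rewrite !hPW ?mul0mx ?sub0mx // ?mulmxDl -?scalemxAl.
    exact: addmx_sub.
  exact: scalemx_sub.
set M := pred_mx P; have spec := pred_mxP hP.
have kerM : (kermx G <= M)%MS.
  apply/row_subP => i; apply/spec/hPW.
  by move/sub_kermxP: (row_sub i (kermx G)) => ->; apply: sub0mx.
have imM : (M *m G == W :&: G)%MS.
  apply/andP; split.
    rewrite sub_capmx submxMl andbT; apply/row_subP => i; rewrite row_mul.
    by apply/hPW/spec; apply: row_sub.
  apply/row_subP => i; have := row_sub i (W :&: G)%MS.
  rewrite sub_capmx => /andP [vW /submxP [t vt]].
  by rewrite vt; apply: submxMr; apply/spec/hPW; rewrite -vt.
have := mxrank_mul_ker M G.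
by rewrite (capmx_idPr kerM) (eqmxP imM) addnC => ->.
Qed.
End PredSubspace.

Section ResidueField.
Local Open Scope quotient_scope.
Variables (S : comUnitRingType) (n : S -> Prop) (Hn : maximal_idealP n).

Lemma maximal_inv_mod x : ~ n x -> exists y, n (y * x - 1).
Proof.
case: Hn => [[[n0 nD nM] n1] nmax] nx.
pose Jx z := exists a b, n a /\ z = a + b * x.
have [[a [b [na e1]]]|nJ1] := classic (Jx 1).
  exists b; have -> : b * x - 1 = - a by rewrite e1 opprD addrCA subrr addr0.
  by rewrite -mulN1r; apply: nM.
exfalso; apply: nx; apply: (nmax Jx); last by exists 0, 1; rewrite add0r mul1r.
  split => //; split.
  - by exists 0, 0; rewrite mul0r addr0.
  - move=> _ _ [a [b [na ->]]] [a' [b' [na' ->]]]; exists (a + a'), (b + b').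
    by split; [apply: nD | rewrite mulrDl addrACA].
  - move=> r _ [a [b [na ->]]]; exists (r * a), (r * b).
    by split; [apply: nM | rewrite mulrDr mulrA].
by move=> z nz; exists z, 0; rewrite mul0r addr0.
Qed.

Definition memn (x : S) : bool := excluded_middle_informative (n x).

Lemma memnP x : reflect (n x) (memn x).
Proof. by rewrite /memn; case: excluded_middle_informative; constructor. Qed.

Lemma memn_idealr : idealr_closed memn.
Proof.
case: Hn => [[[n0 nD nM] n1] _]; split; [exact/memnP | exact/memnP |].
by move=> a u v /memnP nu /memnP nv; apply/memnP/nD/nv/nM.
Qed.

HB.instance Definition _ := isIdealr.Build S memn memn_idealr.

Local Notation residue_ring := {ideal_quot (memn : idealr S)}.

Lemma residue_eqE x y :
  (\pi_residue_ring x == \pi_residue_ring y) = memn (x - y).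
Proof. by rewrite -Quotient.idealrBE. Qed.

Definition residue_inv (k : residue_ring) : residue_ring :=
  if k == 0 then 0 else \pi_residue_ring (epsilon (inhabits 0) (fun y => n (y * repr k - 1))).

Lemma residue_mulVf (k : residue_ring) : k != 0 -> residue_inv k * k = 1.
Proof.
move=> k0; rewrite /residue_inv (negbTE k0).
have nk : ~ n (repr k).
  move/memnP; rewrite -[repr k]subr0 -residue_eqE rmorph0 reprK => e0.
  by rewrite e0 in k0.
have := epsilon_spec (inhabits 0) _ (maximal_inv_mod nk).
set y := epsilon _ _ => /memnP hy.
by rewrite -[k in _ * k]reprK -rmorphM -(rmorph1 \pi_residue_ring); apply/eqP; rewrite residue_eqE.
Qed.

Lemma residue_inv0 : residue_inv 0 = 0.
Proof. by rewrite /residue_inv eqxx. Qed.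

HB.instance Definition _ :=
  GRing.ComNzRing_isField.Build residue_ring residue_mulVf residue_inv0.

Definition residue_field : fieldType := residue_ring.

Definition res : {rmorphism S -> residue_field} := \pi_residue_ring.

Lemma res_eq0 x : res x = 0 <-> n x.
Proof.
rewrite -(rmorph0 res); split => [/eqP|/memnP nx]; last apply/eqP.
  by rewrite residue_eqE subr0 => /memnP.
by rewrite residue_eqE subr0.
Qed.

Lemma res_eqP x y : res x = res y <-> n (x - y).
Proof. by rewrite -res_eq0 rmorphB; split => [->|/eqP]; rewrite ?subrr // subr_eq0 => /eqP. Qed.

Lemma resK (k : residue_field) : res (repr k) = k.
Proof. exact: reprK. Qed.
End ResidueField.

Section ResidueMatrices.
Variables (S : comUnitRingType) (n : S -> Prop) (Hn : maximal_idealP n).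
Local Notation L := (residue_field Hn).
Local Notation res := (res Hn).

Definition resrow e (b : 'I_e -> S) : 'rV[L]_e := \row_i res (b i).

Definition resmx p q (d : 'I_p -> 'I_q -> S) : 'M[L]_(p, q) := \matrix_(i, k) res (d i k).

Lemma resrow_mul p q (c : 'I_p -> S) (d : 'I_p -> 'I_q -> S) k :
  (resrow c *m resmx d) 0 k = res (\sum_(i < p) c i * d i k).
Proof. by rewrite !mxE rmorph_sum; apply: eq_bigr => i _; rewrite !mxE rmorphM. Qed.

Lemma resrow_repr e (l : 'rV[L]_e) : resrow (fun i => repr (l 0 i)) = l.
Proof. by apply/rowP => i; rewrite mxE resK. Qed.

Lemma indep_row_base e (M : 'M[L]_e) :
  exists v : 'I_(\rank M) -> 'I_e -> S, (forall j, (resrow (v j) <= M)%MS) /\ indep_mod_n n v.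
Proof.
pose v j i := repr (row j (row_base M) 0 i).
have vE : resmx v = row_base M.
  by apply/matrixP => j i; rewrite mxE resK mxE.
exists v; split => [j|c hc j].
  by rewrite resrow_repr -(eq_row_base M) row_sub.
have : resrow c *m row_base M = 0.
  by apply/rowP => i; rewrite -vE resrow_mul mxE; apply/res_eq0.
move/eqP; rewrite mulmx_free_eq0 ?row_base_free // => /eqP/rowP/(_ j).
by rewrite !mxE => /res_eq0.
Qed.

Lemma indep_rank_le e (M : 'M[L]_e) d (v : 'I_d -> 'I_e -> S) :
  (forall j, (resrow (v j) <= M)%MS) -> indep_mod_n n v -> (d <= \rank M)%N.
Proof.
move=> vM hind; pose V := resmx v.
have VM : (V <= M)%MS.
  by apply/row_subP => j; rewrite (_ : row j V = resrow (v j)) //; apply/rowP => i; rewrite !mxE.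
suff /eqP <- : row_free V by apply: mxrankS.
rewrite -kermx_eq0 -submx0; apply/row_subP => r; rewrite submx0.
set w := row r (kermx V); have wV : w *m V = 0 by apply/sub_kermxP/row_sub.
apply/eqP; apply/rowP => j; rewrite [RHS]mxE -(resrow_repr w) mxE; apply/res_eq0.
apply: (hind (fun j => repr (w 0 j))) => i.
by apply/res_eq0; rewrite -resrow_mul resrow_repr wV mxE.
Qed.
End ResidueMatrices.

Section RelationSpace.
Variables (S : comUnitRingType) (n : S -> Prop) (Hn : maximal_idealP n).
Local Notation L := (residue_field Hn).
Local Notation res := (res Hn).
Local Notation resrow := (resrow Hn).
Local Notation resmx := (resmx Hn).

(* The relations of z modulo n^2 + N, i.e. the kernel of l |-> sum z_i l_i from L^e to
   n/(n^2 + N); coordinates are lifted with [repr], and relspE shows any lift will do. *)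
Definition relsp e (z : 'I_e -> S) (N : S -> Prop) (l : 'rV[L]_e) : Prop :=
  sq_add n N (\sum_(i < e) z i * repr (l 0 i)).

Definition relmx e (z : 'I_e -> S) (N : S -> Prop) : 'M[L]_e := pred_mx (relsp z N).

Section FixedFamily.
Variables (e : nat) (z : 'I_e -> S) (N : S -> Prop).
Hypotheses (zn : forall i, n (z i)) (hN : is_idealP N).

Lemma relspE (l : 'rV[L]_e) (s : 'I_e -> S) :
  (forall i, res (s i) = l 0 i) ->
  relsp z N l <-> sq_add n N (\sum_(i < e) z i * s i).
Proof.
move=> hs; apply: ideal_shift; first exact: sq_add_ideal.
rewrite -sumrB; under eq_bigr do rewrite -mulrBr.
by apply: sq_add_lincomb => // i; apply/res_eqP; rewrite resK hs.
Qed.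

Lemma relsp_lin : lin_closed (relsp z N).
Proof.
have hQ := sq_add_ideal n hN.
split => [|u v hu hv|a u hu].
- rewrite (@relspE 0 (fun=> 0)) => [|i]; last by rewrite rmorph0 mxE.
  by rewrite big1 => [|i _]; [apply: ideal0 | rewrite mulr0].
- rewrite (@relspE _ (fun i => repr (u 0 i) + repr (v 0 i))) => [|i]; last first.
    by rewrite rmorphD !resK mxE.
  by under eq_bigr do rewrite mulrDr; rewrite big_split; apply: idealD.
- rewrite (@relspE _ (fun i => repr a * repr (u 0 i))) => [|i]; last first.
    by rewrite rmorphM !resK mxE.
  by under eq_bigr do rewrite mulrCA; rewrite -mulr_sumr; apply: idealZ.
Qed.

Lemma relmxP (l : 'rV[L]_e) : relsp z N l <-> (l <= relmx z N)%MS.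
Proof. exact/pred_mxP/relsp_lin. Qed.

Lemma relmx_resrowP (b : 'I_e -> S) :
  (resrow b <= relmx z N)%MS <-> sq_add n N (\sum_(i < e) z i * b i).
Proof. by rewrite -relmxP; apply: relspE => i; rewrite mxE. Qed.

Lemma relsp_cot_basis (l : 'rV[L]_e) : cot_basis n N z -> relsp z N l -> l = 0.
Proof.
case=> _ zind _ hl; apply/rowP => i; rewrite mxE -(resK (l 0 i)); apply/res_eq0.
by apply: (zind (fun i => repr (l 0 i))); under eq_bigr do rewrite mulrC.
Qed.

Lemma rank_relmx_cot_basis : cot_basis n N z -> \rank (relmx z N) = 0%N.
Proof.
move=> cz; apply/eqP; rewrite mxrank_eq0 -submx0; apply/row_subP => i.
by rewrite submx0; apply/eqP/(relsp_cot_basis cz)/relmxP/row_sub.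
Qed.

End FixedFamily.

Lemma relmx_mono e (z : 'I_e -> S) (N N' : S -> Prop) :
  (forall i, n (z i)) -> is_idealP N -> is_idealP N' -> (forall b, N b -> N' b) ->
  (relmx z N <= relmx z N')%MS.
Proof.
move=> zn hN hN' NN'; apply/row_subP => i; apply/(relmxP zn hN').
exact/(ideal_sum_monor NN')/(relmxP zn hN)/row_sub.
Qed.

Section ChangeOfFamily.
Variables (e g : nat) (z : 'I_e -> S) (w : 'I_g -> S) (d : 'I_e -> 'I_g -> S) (N : S -> Prop).
Hypotheses (wn : forall k, n (w k)) (hN : is_idealP N).
Hypothesis zdw : forall i, sq_add n N (z i - \sum_(k < g) d i k * w k).

Lemma relsp_change (l : 'rV[L]_e) : relsp z N l <-> (l *m resmx d <= relmx w N)%MS.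
Proof.
have hQ := sq_add_ideal n hN; pose r i := repr (l 0 i).
apply: (iff_trans (ideal_shift hQ (ideal_change_coords r hQ zdw))).
by rewrite -relmxP //; symmetry; apply: relspE => // k; rewrite -resrow_mul resrow_repr.
Qed.

Lemma rank_relmx_change :
  \rank (relmx z N) = (\rank (kermx (resmx d)) + \rank (relmx w N :&: resmx d))%N.
Proof. exact/rank_pred_mx_preim/relsp_change. Qed.
End ChangeOfFamily.
End RelationSpace.

Arguments relmx {S n} Hn {e} z N.

Section Spanning.
Variables (R : comUnitRingType) (m I : R -> Prop).

Definition cot_spanning e (x : 'I_e -> R) : Prop :=
  (forall i, m (x i)) /\
  forall y, m y -> exists a : 'I_e -> R, sq_add m I (y - \sum_(i < e) a i * x i).

Lemma cot_basis_spanning e (x : 'I_e -> R) : cot_basis m I x -> cot_spanning x.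
Proof. by case. Qed.

Lemma cot_spanning_coords e (x : 'I_e -> R) p (y : 'I_p -> R) :
  cot_spanning x -> (forall k, m (y k)) ->
  exists c : 'I_p -> 'I_e -> R, forall k, sq_add m I (y k - \sum_(i < e) c k i * x i).
Proof.
case=> _ xsp ym.
by apply: (choice (fun k a => sq_add m I (y k - \sum_(i < e) a i * x i))) => k; apply: xsp.
Qed.
End Spanning.

Lemma cot_spanning_mono (R : comUnitRingType) (m I I' : R -> Prop) e (x : 'I_e -> R) :
  (forall a, I a -> I' a) -> cot_spanning m I x -> cot_spanning m I' x.
Proof.
move=> II' [xm xsp]; split => // y /xsp [a ha]; exists a.
exact: ideal_sum_monor ha.
Qed.

Lemma cot_basis0_spanning (R : comUnitRingType) (m I : R -> Prop) e (x : 'I_e -> R) :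
  cot_basis m (@zero_ideal R) x -> is_idealP I -> cot_spanning m I x.
Proof.
by move=> /cot_basis_spanning xs hI; apply: cot_spanning_mono xs; apply: zero_ideal_sub.
Qed.

Section CotBasisOfSpanning.
Variables (R : comUnitRingType) (m : R -> Prop) (Hm : maximal_idealP m) (I : R -> Prop).
Hypothesis hI : is_idealP I.
Variables (e : nat) (x : 'I_e -> R).
Hypothesis xs : cot_spanning m I x.

(* Lifting a basis of a complement of the relations of x gives a basis of m/(m^2 + I). *)
Let Rel := relmx Hm x I.
Let C := row_base (Rel^C)%MS.
Let g k i := repr (C k i).
Let x' k := \sum_(i < e) g k i * x i.

Let CE : C = resmx Hm g.
Proof. by apply/matrixP => k j; rewrite [RHS]mxE resK. Qed.

Lemma compl_family_indep (a : 'I_(\rank Rel^C) -> R) :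
  sq_add m I (\sum_(k < \rank Rel^C) a k * x' k) -> forall k, m (a k).
Proof.
have [xm _] := xs; rewrite /x' exchange_sum_mul => ha.
set w := resrow Hm a *m C.
have wRel : (w <= Rel)%MS.
  have hs i : res Hm (\sum_k a k * g k i) = w 0 i.
    by rewrite /w CE resrow_mul.
  by apply/(relmxP xm hI)/(relspE xm hI hs); under eq_bigr do rewrite mulrC.
have wC : (w <= Rel^C)%MS by rewrite -(eq_row_base (Rel^C)%MS) submxMl.
have : (w <= Rel :&: Rel^C)%MS by rewrite sub_capmx wRel wC.
rewrite capmx_compl submx0 mulmx_free_eq0 ?row_base_free // => /eqP/rowP h k.
by have := h k; rewrite !mxE => /res_eq0.
Qed.

Lemma compl_family_spanning y : m y ->
  exists b, sq_add m I (y - \sum_(k < \rank Rel^C) b k * x' k).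
Proof.
have [xm xsp] := xs; have hQ := sq_add_ideal m hI.
move=> /xsp [a ha]; set u := resrow Hm a.
have /sub_addsmxP [[u1 u2] /= hu] : (u <= Rel + Rel^C)%MS.
  by apply: submx_trans (submx1 u) _; rewrite sub1mx addsmx_compl_full.
have /submxP [t ht] : (u2 *m Rel^C <= C)%MS by rewrite eq_row_base submxMl.
pose b k := repr (t 0 k); exists b.
rewrite /x' exchange_sum_mul.
set s := fun i => \sum_k b k * g k i.
have hs i : res Hm (a i - s i) = (u1 *m Rel) 0 i.
  have -> : u1 *m Rel = u - resrow Hm b *m C by rewrite hu ht resrow_repr addrK.
  by rewrite rmorphB /s CE -resrow_mul !mxE.
have /(relspE xm hI hs) hrel : relsp x I (u1 *m Rel) by apply/(relmxP xm hI)/submxMl.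
have -> : y - \sum_(i < e) s i * x i =
          (y - \sum_(i < e) a i * x i) + \sum_(i < e) x i * (a i - s i).
  have -> : \sum_(i < e) s i * x i =
            \sum_(i < e) a i * x i - \sum_(i < e) x i * (a i - s i).
    rewrite -sumrB; apply: eq_bigr => i _.
    by rewrite mulrBr [x i * _]mulrC [x i * _]mulrC opprB addrC subrK.
  by rewrite opprB addrCA addrC.
exact: idealD.
Qed.
End CotBasisOfSpanning.

Lemma cot_basis_of_spanning (R : comUnitRingType) (m I : R -> Prop) e (x : 'I_e -> R) :
  maximal_idealP m -> is_idealP I -> cot_spanning m I x ->
  exists e' (x' : 'I_e' -> R), cot_basis m I x'.
Proof.
move=> Hm hI xs; have [xm _] := xs.
eexists; exists (fun k => \sum_(i < e) repr (row_base (relmx Hm x I)^C%MS k i) * x i); split.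
- have hm := maximal_idealP_ideal Hm.
  by move=> k; apply: ideal_bigsum => // i; apply: idealZ.
- exact: compl_family_indep.
- exact: compl_family_spanning.
Qed.

Lemma cot_basis0_exists (R : comUnitRingType) (m : R -> Prop) :
  maximal_idealP m -> noetherian R -> exists e (x : 'I_e -> R), cot_basis m (@zero_ideal R) x.
Proof.
move=> Hm noeth; have [k [g [gm gsp]]] := noeth m (maximal_idealP_ideal Hm).
apply: (cot_basis_of_spanning Hm (@zero_idealP R) (x := g)); split => // y /gsp [c ->].
by exists c; rewrite subrr; apply: ideal0; apply/sq_add_ideal/zero_idealP.
Qed.

Section RegularityDefect.
Variables (R S : comUnitRingType) (m I : R -> Prop) (n N : S -> Prop).
Hypotheses (Hn : maximal_idealP n) (hN : is_idealP N).

Lemma is_rdP (f : R -> S) r : (forall a, m a -> n (f a)) ->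
  is_rd f m n I N r <->
  exists e (x : 'I_e -> R), cot_basis m I x /\ r = \rank (relmx Hn (fun i => f (x i)) N).
Proof.
move=> fm; have kerP e (x : 'I_e -> R) b : cot_basis m I x ->
    in_kernel f n N x b <-> (resrow Hn b <= relmx Hn (fun i => f (x i)) N)%MS.
  by case=> xm _ _; rewrite relmx_resrowP // => i; apply: fm.
split => [[e [x [cx [[v [hv iv]] hb]]]]|[e [x [cx ->]]]]; exists e, x; split => //.
  apply/eqP; rewrite eqn_leq (indep_rank_le _ iv) => [|j]; last exact/kerP.
  have [w [hw iw]] := indep_row_base (relmx Hn (fun i => f (x i)) N).
  by apply: (hb _ w) => // j; apply/kerP.
split; last by move=> d v hv iv; apply: (indep_rank_le _ iv) => j; apply/kerP.
have [w [hw iw]] := indep_row_base (relmx Hn (fun i => f (x i)) N).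
by exists w; split => // j; apply/kerP.
Qed.

Lemma rdq_cot_basis (f : R -> S) : (forall a, m a -> n (f a)) ->
  (exists e (x : 'I_e -> R), cot_basis m I x) ->
  exists e (x : 'I_e -> R),
    cot_basis m I x /\ rdq f m n I N = \rank (relmx Hn (fun i => f (x i)) N).
Proof.
move=> fm [e [x cx]]; apply/(is_rdP _ fm); apply: epsilon_spec.
by exists (\rank (relmx Hn (fun i => f (x i)) N)); apply/(is_rdP _ fm); exists e, x.
Qed.
End RegularityDefect.

Lemma sum_delta (R : comUnitRingType) p (k : 'I_p) (v : 'I_p -> R) :
  \sum_(j < p) (k == j)%:R * v j = v k.
Proof.
rewrite (bigD1 k) //= eqxx mul1r big1 ?addr0 // => j /negbTE.
by rewrite eq_sym => ->; rewrite mul0r.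
Qed.

Section CoordinateChange.
Variables (R : comUnitRingType) (m I : R -> Prop).
Hypothesis hI : is_idealP I.
Variables (e e' : nat) (x : 'I_e -> R) (x' : 'I_e' -> R) (d : 'I_e -> 'I_e' -> R).
Hypotheses (xs : cot_spanning m I x) (cx' : cot_basis m I x').
Hypothesis xdx' : forall i, sq_add m I (x i - \sum_(j < e') d i j * x' j).

Lemma cot_basis_coords_inv :
  exists c : 'I_e' -> 'I_e -> R, forall k j, m (\sum_(i < e) c k i * d i j - (k == j)%:R).
Proof.
have [x'm x'ind _] := cx'; have hQ := sq_add_ideal m hI.
have [c x'cx] := cot_spanning_coords xs x'm; exists c => k.
apply: x'ind; under eq_bigr do rewrite mulrBl.
rewrite sumrB sum_delta.
have := ideal_change_coords (c k) hQ xdx'.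
under [X in X - _]eq_bigr do rewrite mulrC.
under [X in _ - X]eq_bigr do rewrite mulrC.
move=> /(idealD hQ (x'cx k)); rewrite addrA subrK => /(idealN hQ).
by rewrite opprB.
Qed.
End CoordinateChange.

Lemma row_full_resmx_map (R S : comUnitRingType) (f : {rmorphism R -> S})
    (m : R -> Prop) (n : S -> Prop) (Hn : maximal_idealP n) p q
    (c : 'I_q -> 'I_p -> R) (d : 'I_p -> 'I_q -> R) :
  (forall a, m a -> n (f a)) -> (forall k j, m (\sum_(i < p) c k i * d i j - (k == j)%:R)) ->
  row_full (resmx Hn (fun i j => f (d i j))).
Proof.
move=> fm cd1; rewrite -sub1mx.
have <- : resmx Hn (fun k i => f (c k i)) *m resmx Hn (fun i j => f (d i j)) = 1%:M.
  apply/matrixP => k j; rewrite [RHS]mxE -(rmorph_nat (res Hn)) -(rmorph_nat f).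
  transitivity (res Hn (f (\sum_(i < p) c k i * d i j))); last first.
    by apply/res_eqP; rewrite -rmorphB; apply/fm/cd1.
  by rewrite !mxE !rmorph_sum; apply: eq_bigr => i _; rewrite !mxE !rmorphM.
exact: submxMl.
Qed.

Section SpanningFormula.
Variables (R S : comUnitRingType) (f : {rmorphism R -> S}).
Variables (m I : R -> Prop) (n N : S -> Prop).
Hypotheses (Hm : maximal_idealP m) (Hn : maximal_idealP n).
Hypotheses (hI : is_idealP I) (hN : is_idealP N).
Hypotheses (fm : forall a, m a -> n (f a)) (fIN : forall a, I a -> N (f a)).

(* Both relation spaces are preimages under the coordinate change from x to a cotangent
   basis, whose kernel has dimension e - e' on both sides. *)
Lemma rdq_spanning_formula e (x : 'I_e -> R) : cot_spanning m I x ->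
  (rdq f m n I N + \rank (relmx Hm x I))%N = \rank (relmx Hn (fun i => f (x i)) N).
Proof.
move=> xs; have [xm _] := xs.
have [e' [x' [cx' ->]]] := rdq_cot_basis Hn hN fm (cot_basis_of_spanning Hm hI xs).
have [x'm _ _] := cx'.
have [d xdx'] := cot_spanning_coords (cot_basis_spanning cx') xm.
have [c cd1] := cot_basis_coords_inv hI xs cx' xdx'.
have fD := row_full_resmx_map Hn fm cd1.
have D : row_full (resmx Hm d) := row_full_resmx_map (f := idfun) Hm (fun a h => h) cd1.
have fxdx' i : sq_add n N (f (x i) - \sum_(j < e') f (d i j) * f (x' j)).
  have := sq_add_map fm fIN (xdx' i); rewrite rmorphB rmorph_sum.
  by under eq_bigr do rewrite rmorphM.
rewrite (rank_relmx_change Hm x'm hI xdx').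
rewrite (rank_relmx_change Hn (fun j => fm (x'm j)) hN fxdx').
rewrite (capmx_idPl (submx_full _ fD)).
have -> : \rank (relmx Hm x' I :&: resmx Hm d)%MS = 0%N.
  by apply/eqP; rewrite -leqn0 -(rank_relmx_cot_basis Hm x'm hI cx') mxrankS ?capmxSl.
by rewrite !mxrank_ker (eqP D) (eqP fD) addn0 addnC.
Qed.
End SpanningFormula.

Section Noetherian.
Variables (R : comUnitRingType) (noeth : noetherian R).

Lemma noetherian_chain_stationary (ch : nat -> R -> Prop) :
  (forall k, is_idealP (ch k)) -> (forall k x, ch k x -> ch k.+1 x) ->
  exists k, forall j x, ch j x -> ch k x.
Proof.
move=> chI chS; have mono j k : (j <= k)%N -> forall x, ch j x -> ch k x.
  move=> /subnKC <-; elim: (k - j)%N => [|d IH] x h; first by rewrite addn0.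
  by rewrite addnS; apply/chS/IH.
pose U x := exists k, ch k x.
have hU : is_idealP U.
  split => [|x y [j xj] [k yk]|r x [k xk]]; first by exists 0%N; apply: ideal0.
    exists (maxn j k); apply: idealD => //.
      by apply: mono xj; rewrite leq_maxl.
    by apply: mono yk; rewrite leq_maxr.
  by exists k; apply: idealZ.
have [p [g [gU gsp]]] := noeth hU.
have [K hK] := choice (fun i k => ch k (g i)) gU.
exists (\max_(i < p) K i)%N => j x xj; have [c ->] := gsp x (ex_intro _ j xj).
apply: ideal_bigsum => // i; apply: idealZ => //.
exact/(mono _ _ (leq_bigmax i))/hK.
Qed.

Lemma proper_ideal_sub_maximal (I : R -> Prop) :
  proper_idealP I -> exists M, maximal_idealP M /\ forall a, I a -> M a.
Proof.
move=> hI; apply: NNPP => nM.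
pose bigger (P J : R -> Prop) :=
  [/\ proper_idealP J, (forall a, P a -> J a) & exists x, J x /\ ~ P x].
have step P : proper_idealP P -> (forall a, I a -> P a) -> exists J, bigger P J.
  move=> hP IP; apply: NNPP => nJ; apply: nM; exists P; split=> //; split=> // J hJ PJ x Jx.
  by apply: NNPP => nPx; apply: nJ; exists J; split => //; exists x.
pose ch := fix ch k := if k is k'.+1 then epsilon (inhabits I) (bigger (ch k')) else I.
have chP k : proper_idealP (ch k) /\ forall a, I a -> ch k a.
  elim: k => [|k [hk Ik]] //=.
  have [hn sub _] := epsilon_spec (inhabits I) _ (step _ hk Ik).
  by split => // a /Ik /sub.
have chS k : bigger (ch k) (ch k.+1).
  by have [hk Ik] := chP k; apply: (epsilon_spec (inhabits I) _ (step _ hk Ik)).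
have chI k : is_idealP (ch k) by case: (chP k) => [[]].
have chSS k : forall x, ch k x -> ch k.+1 x by case: (chS k).
have [k chk] := noetherian_chain_stationary chI chSS.
by have [_ _ [x [hx nx]]] := chS k; apply: nx; apply: chk hx.
Qed.

Lemma proper_ideal_sub_local (m I : R -> Prop) :
  local_ring_with m -> proper_idealP I -> forall a, I a -> m a.
Proof.
move=> [_ uniq] /proper_ideal_sub_maximal [M [hM IM]] a /IM.
by move/(uniq M hM).
Qed.
End Noetherian.

Lemma relmx_ideal_sum (S : comUnitRingType) (n : S -> Prop) (Hn : maximal_idealP n)
    g (y : 'I_g -> S) (N1 N2 : S -> Prop) :
  cot_spanning n (@zero_ideal S) y -> is_idealP N1 -> is_idealP N2 ->
  (forall b, N2 b -> n b) ->
  (relmx Hn y (ideal_sum N1 N2) :=: relmx Hn y N1 + relmx Hn y N2)%MS.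
Proof.
move=> ys h1 h2 N2n; have [ym ysp] := ys; have h12 := ideal_sum_ideal h1 h2.
have [Q1 Q2] := (sq_add_ideal n h1, sq_add_ideal n h2).
apply: pred_mx_eqmx => [|w]; first exact: relsp_lin.
split=> [[a [_ [ha [[j1 [j2 [hj1 [hj2 ->]]]] hw]]]]|/sub_addsmxP [[u1 u2] /= ->]].
  have [c hc0] := ysp j2 (N2n _ hj2).
  have hc := ideal_sum_monor (zero_ideal_sub h2) hc0.
  have cN2 : (resrow Hn c <= relmx Hn y N2)%MS.
    apply/(relmx_resrowP Hn ym h2); under eq_bigr do rewrite mulrC.
    by apply/(ideal_shift Q2 hc)/sq_add_r.
  have wcN1 : (w - resrow Hn c <= relmx Hn y N1)%MS.
    have -> : w - resrow Hn c = resrow Hn (fun k => repr (w 0 k) - c k).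
      by apply/rowP => k; rewrite !mxE rmorphB resK.
    apply/(relmx_resrowP Hn ym h1); under eq_bigr do rewrite mulrBr.
    rewrite sumrB; move: hw; rewrite /relsp => ->.
    rewrite -addrA -addrA; apply: idealD => //; first exact: sq_add_sqr.
    apply: idealD => //; first exact: sq_add_r.
    under eq_bigr do rewrite mulrC.
    exact: ideal_sum_monor (zero_ideal_sub h1) hc0.
  by rewrite -(subrK (resrow Hn c) w) addmx_sub_adds.
apply/(relmxP ym h12)/addmx_sub; apply: submx_trans (submxMl _ _) _.
  by apply: relmx_mono => // b; apply: ideal_sum_l.
by apply: relmx_mono => // b; apply: ideal_sum_r.
Qed.

Section LocalMap.
Variables (A B : comUnitRingType) (phi : {rmorphism A -> B}) (mA : A -> Prop) (nB : B -> Prop).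
Hypotheses (HmA : maximal_idealP mA) (HnB : maximal_idealP nB).
Hypothesis Hloc : forall a, mA a -> nB (phi a).
Variables (e g : nat) (x : 'I_e -> A) (y : 'I_g -> B) (al : 'I_e -> 'I_g -> B).
Hypotheses (cx : cot_basis mA (@zero_ideal A) x) (cy : cot_basis nB (@zero_ideal B) y).
Hypothesis phix : forall i, sq_add nB (@zero_ideal B) (phi (x i) - \sum_(k < g) al i k * y k).

Local Notation G := (resmx HnB al).
Local Notation mB := (ideal_ext phi mA).

Let xm : forall i, mA (x i). Proof. by case: cx. Qed.
Let ym : forall k, nB (y k). Proof. by case: cy. Qed.
Let hQ0 : is_idealP (sq_add nB (@zero_ideal B)). Proof. exact/sq_add_ideal/zero_idealP. Qed.

Lemma ext_ideal_coords b : mB b ->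
  exists u : 'I_e -> B, sq_add nB (@zero_ideal B) (b - \sum_(i < e) phi (x i) * u i).
Proof.
case=> [p [r [h [hm ->]]]].
have [a ha] := choice (fun j a => mA a /\ h j = phi a) hm.
have [c ac] := cot_spanning_coords (cot_basis_spanning cx) (fun j => (ha j).1).
have phiac j : sq_add nB (@zero_ideal B) (phi (a j) - \sum_(i < e) phi (c j i) * phi (x i)).
  have := sq_add_map Hloc (@zero_ideal_map _ _ phi) (ac j).
  by rewrite rmorphB rmorph_sum; under eq_bigr do rewrite rmorphM.
exists (fun i => \sum_(j < p) r j * phi (c j i)).
have := ideal_change_coords r hQ0 phiac.
congr (sq_add _ _ (_ - _)); apply: eq_bigr => j _.
by rewrite (ha j).2 mulrC.
Qed.

Lemma relmx_ext_ideal : (relmx HnB y mB == G)%MS.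
Proof.
have hmB : is_idealP mB := ideal_span_ideal _.
have phixmB i : sq_add nB mB (phi (x i) - \sum_(k < g) al i k * y k).
  exact: ideal_sum_monor (zero_ideal_sub hmB) (phix i).
apply/andP; split; last first.
  rewrite -[G]mul1mx; apply/row_subP => i; rewrite row_mul.
  apply/(relsp_change ym hmB phixmB); apply: sq_add_r.
  apply: ideal_bigsum => // j; apply: idealZr => //.
  by apply: ideal_span_sub; exists (x j).
apply/row_subP => k; set w := row k _.
have [q [b [hq [/ext_ideal_coords [u hu] hw]]]] : relsp y mB w.
  exact/(relmxP ym hmB)/row_sub.
suff -> : w = resrow HnB u *m G by apply: submxMl.
apply/eqP; rewrite -subr_eq0; apply/eqP/(relsp_cot_basis cy).
pose s j := repr (w 0 j) - \sum_(i < e) u i * al i j.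
have hs j : res HnB (s j) = (w - resrow HnB u *m G) 0 j.
  by rewrite rmorphB resK -resrow_mul !mxE.
apply/(relspE ym (@zero_idealP B) hs).
under eq_bigr do rewrite mulrBr.
rewrite sumrB hw -addrA; apply: idealD => //; first exact: (sq_add_sqr (@zero_idealP B)).
rewrite -(subrK (\sum_(i < e) phi (x i) * u i) b) -addrA; apply: idealD => //.
exact: ideal_change_coords.
Qed.

Lemma rdq_map_rank (I : A -> Prop) (N : B -> Prop) :
  is_idealP I -> is_idealP N -> (forall a, I a -> N (phi a)) ->
  (rdq phi mA nB I N + \rank (relmx HmA x I))%N =
  (\rank (kermx G) + \rank (relmx HnB y N :&: G))%N.
Proof.
move=> hI hN IN; rewrite (rdq_spanning_formula HmA HnB hI hN Hloc IN (cot_basis0_spanning cx hI)).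
exact: (rank_relmx_change HnB ym hN (fun i => ideal_sum_monor (zero_ideal_sub hN) (phix i))).
Qed.
End LocalMap.

Lemma rdq_quot_rank (R : comUnitRingType) (m : R -> Prop) (Hm : maximal_idealP m)
    e (x : 'I_e -> R) (N1 N2 : R -> Prop) :
  cot_basis m (@zero_ideal R) x -> is_idealP N1 -> is_idealP N2 -> (forall a, N1 a -> N2 a) ->
  (rdq id m m N1 N2 + \rank (relmx Hm x N1))%N = \rank (relmx Hm x N2).
Proof.
move=> cx h1 h2 N12.
exact: (rdq_spanning_formula (f := idfun) Hm Hm h1 h2 (fun _ h => h) N12
  (cot_basis0_spanning cx h1)).
Qed.

Lemma rdq_local_map_identities (A B : comUnitRingType) (phi : {rmorphism A -> B})
    (mA : A -> Prop) (nB : B -> Prop) (I : A -> Prop) (J : B -> Prop) :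
  maximal_idealP mA -> maximal_idealP nB -> (forall a, mA a -> nB (phi a)) ->
  noetherian A -> noetherian B ->
  is_idealP I -> (forall a, I a -> mA a) -> is_idealP J -> (forall b, ideal_ext phi I b -> J b) ->
  let IB := ideal_ext phi I in
  let mB := ideal_ext phi mA in
  (rdq phi mA nB I IB + rdq id nB nB IB J =
     rdq phi mA nB I J + rdq id nB nB mB (ideal_sum J mB))%N /\
  (rdq phi mA nB I IB + rdq id mA mA (@zero_ideal A) I =
     rdq phi mA nB (@zero_ideal A) (@zero_ideal B) + rdq id nB nB (@zero_ideal B) IB)%N.
Proof.
move=> HmA HnB Hloc noethA noethB hI ImA hJ IBJ IB mB.
have [e [x cx]] := cot_basis0_exists HmA noethA.
have [g [y cy]] := cot_basis0_exists HnB noethB.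
have [[xm _ _] [ym _ _]] := (cx, cy).
have [al phix] := cot_spanning_coords (cot_basis_spanning cy) (fun i => Hloc _ (xm i)).
have [hIB hmB] : is_idealP IB /\ is_idealP mB by split; apply: ideal_span_ideal.
have phiI a : I a -> IB (phi a) by move=> ha; apply: ideal_span_sub; exists a.
have IBmB : forall b, IB b -> mB b.
  by apply: ideal_span_min => // _ [a [/ImA ha ->]]; apply: ideal_span_sub; exists a.
have mBnB : forall b, mB b -> nB b.
  by apply: ideal_span_min => [|_ [a [/Hloc ha ->]]] //; apply: maximal_idealP_ideal.
have WmB : (relmx HnB y mB :=: resmx HnB al)%MS := eqmxP (relmx_ext_ideal HnB Hloc cx cy phix).
have WIB : (relmx HnB y IB <= resmx HnB al)%MS by rewrite -WmB; apply: relmx_mono.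
have rdI := rdq_map_rank HmA HnB Hloc cx cy phix hI hIB phiI.
have rdIJ := rdq_map_rank HmA HnB Hloc cx cy phix hI hJ (fun a h => IBJ _ (phiI a h)).
have rd0 := rdq_map_rank HmA HnB Hloc cx cy phix zero_idealP zero_idealP (zero_ideal_map phi).
have rdJIB := rdq_quot_rank HnB cy hIB hJ IBJ.
have rdJmB := rdq_quot_rank HnB cy hmB (ideal_sum_ideal hJ hmB) (fun b => ideal_sum_r hJ).
have rdIA := rdq_quot_rank HmA cx zero_idealP hI (zero_ideal_sub hI).
have rdIB := rdq_quot_rank HnB cy zero_idealP hIB (zero_ideal_sub hIB).
have sum_cap := mxrank_sum_cap (relmx HnB y J) (relmx HnB y mB).
have zero_cap : \rank (relmx HnB y (@zero_ideal B) :&: resmx HnB al)%MS = 0%N.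
  by apply/eqP; rewrite -leqn0 -(rank_relmx_cot_basis HnB ym zero_idealP cy) mxrankS ?capmxSl.
rewrite (capmx_idPl WIB) in rdI; rewrite zero_cap in rd0.
rewrite (relmx_ideal_sum HnB (cot_basis_spanning cy) hJ hmB mBnB) in rdJmB.
rewrite (cap_eqmx (eqmx_refl _) WmB) in sum_cap.
rewrite (rank_relmx_cot_basis HmA xm zero_idealP cx) in rd0 rdIA.
rewrite (rank_relmx_cot_basis HnB ym zero_idealP cy) in rdIB.
lia.
Qed.

Theorem proposition3p12
  (A B : comUnitRingType) (mA : A -> Prop) (nB : B -> Prop)
  (phi : {rmorphism A -> B})
  (HA : local_ring_with mA) (HB : local_ring_with nB)
  (noethA : noetherian A) (noethB : noetherian B)
  (Hloc : forall a, mA a -> nB (phi a))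
  (I : A -> Prop) (J : B -> Prop)
  (HI : proper_idealP I) (HJ : proper_idealP J)
  (HIJ : forall b, ideal_ext phi I b -> J b) :
  let IB := ideal_ext phi I in
  let mB := ideal_ext phi mA in
  let rd_phi := rdq phi mA nB (@zero_ideal A) (@zero_ideal B) in
  let rd_phiI := rdq phi mA nB I IB in
  let rd_phiIJ := rdq phi mA nB I J in
  let rd_piJIB := rdq id nB nB IB J in
  let rd_piJmB := rdq id nB nB mB (ideal_sum J mB) in
  let rd_piI := rdq id mA mA (@zero_ideal A) I in
  let rd_piIB := rdq id nB nB (@zero_ideal B) IB in
  (rd_phiI%:Z + rd_piJIB%:Z - rd_phiIJ%:Z = rd_piJmB%:Z) /\
  (rd_phiIJ%:Z = rd_phiI%:Z + rd_piJIB%:Z - rd_piJmB%:Z) /\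
  (rd_phiIJ%:Z = rd_phi%:Z - (rd_piI%:Z - rd_piIB%:Z) + rd_piJIB%:Z - rd_piJmB%:Z).
Proof.
have [[HmA _] [HnB _]] := (HA, HB).
have ImA := proper_ideal_sub_local noethA HA HI.
have [] := rdq_local_map_identities HmA HnB Hloc noethA noethB HI.1 ImA HJ.1 HIJ.
by move=> /= h1 h2; split; [lia | split; lia].
Qed.
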